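(* Let $(X,\mathrm{dist})$ be a metric space and $\Sigma$ a compact metric space. Let $T(h):\Sigma\to\Sigma$, $h\ge0$, be a semigroup with $T(h)\Sigma=\Sigma$ for all $h\ge0$, and let $\{U_\sigma(t,\tau)\}_{\sigma\in\Sigma}$ be a family of processes on $X$ satisfying $U_\sigma(h+t,h+\tau)=U_{T(h)\sigma}(t,\tau)$ for all $\sigma\in\Sigma$, $h\ge0$, $t\ge\tau$. Assume the family is uniformly asymptotically compact, with uniform global attractor $A_\Sigma$. Assume there exists $h_\star>0$ such that the maps $(x,\sigma)\mapsto U_\sigma(h_\star,0)x$ from $X\times\Sigma$ to $X$ and $\sigma\mapsto T(h_\star)\sigma$ from $\Sigma$ to $\Sigma$ are closed. Then $A_\Sigma=\bigcup_{\sigma\in\Sigma}\mathcal{K}_\sigma(0)$.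
   Context: A process on $X$ is a family of maps $U(t,\tau):X\to X$, indexed by reals $t\ge\tau$, with $U(\tau,\tau)=\mathrm{id}_X$ and $U(t,\tau)=U(t,s)U(s,\tau)$ for $t\ge s\ge\tau$. For nonempty $B,C\subset X$, $\delta_X(B,C)=\sup_{x\in B}\inf_{\xi\in C}\mathrm{dist}(x,\xi)$. A set $K\subset X$ is uniformly attracting for the family if for every bounded $C\subset X$, $\lim_{t-\tau\to\infty}\sup_{\sigma\in\Sigma}\delta_X(U_\sigma(t,\tau)C,K)=0$. The family is uniformly asymptotically compact if there is a compact uniformly attracting set; the uniform global attractor $A_\Sigma$ is the compact uniformly attracting set contained in every compact uniformly attracting set. A map $f:Y\to Z$ between metric spaces is closed if $f(y)=z$ whenever $y_n\to y$ and $f(y_n)\to z$. For fixed $\sigma\in\Sigma$, a complete bounded trajectory of $U_\sigma(t,\tau)$ is a function $x:\mathbb{R}\to X$ with $\{x(s)\}_{s\in\mathbb{R}}$ bounded and $x(s)=U_\sigma(s,\tau)x(\tau)$ for all $s\ge\tau$, $\tau\in\mathbb{R}$. The kernel section at time $t$ is $\mathcal{K}_\sigma(t)=\{x(t): x \text{ is a complete bounded trajectory of } U_\sigma(t,\tau)\}$. *)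

From Stdlib Require Import Reals List.
Open Scope R_scope.

Definition is_metric {X : Type} (d : X -> X -> R) : Prop :=
  (forall x y, 0 <= d x y) /\
  (forall x y, d x y = 0 <-> x = y) /\
  (forall x y, d x y = d y x) /\
  (forall x y z, d x z <= d x y + d y z).

Definition bounded_set {X : Type} (d : X -> X -> R) (B : X -> Prop) : Prop :=
  exists x0 r, forall x, B x -> d x0 x <= r.

Definition open_set {X : Type} (d : X -> X -> R) (U : X -> Prop) : Prop :=
  forall x, U x -> exists e, 0 < e /\ forall y, d x y < e -> U y.

Definition compact_set {X : Type} (d : X -> X -> R) (K : X -> Prop) : Prop :=
  forall (I : Type) (U : I -> X -> Prop),
    (forall i, open_set d (U i)) ->
    (forall x, K x -> exists i, U i x) ->
    exists l : list I, forall x, K x -> exists i, In i l /\ U i x.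

Definition seq_conv {X : Type} (d : X -> X -> R) (u : nat -> X) (l : X) : Prop :=
  forall e, 0 < e -> exists N, forall n, (N <= n)%nat -> d (u n) l < e.

(* delta_le d B C e  <->  delta_X(B,C) = sup_{x in B} inf_{xi in C} d x xi <= e *)
Definition delta_le {X : Type} (d : X -> X -> R) (B C : X -> Prop) (e : R) : Prop :=
  forall x, B x -> forall e', e < e' -> exists xi, C xi /\ d x xi < e'.

Definition image {X Y : Type} (f : X -> Y) (B : X -> Prop) : Y -> Prop :=
  fun y => exists x, B x /\ f x = y.

Definition is_process_family {X S : Type} (U : S -> R -> R -> X -> X) : Prop :=
  forall s,
    (forall tau x, U s tau tau x = x) /\
    (forall t r tau x, r <= t -> tau <= r -> U s t tau x = U s t r (U s r tau x)).

Definition unif_attracting {X S : Type} (d : X -> X -> R)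
    (U : S -> R -> R -> X -> X) (K : X -> Prop) : Prop :=
  forall C, bounded_set d C ->
    forall e, 0 < e -> exists T0, forall t tau, T0 <= t - tau ->
      forall s, delta_le d (image (U s t tau) C) K e.

Definition complete_bounded_traj {X S : Type} (d : X -> X -> R)
    (U : S -> R -> R -> X -> X) (s : S) (x : R -> X) : Prop :=
  bounded_set d (fun y => exists r, x r = y) /\
  (forall sv tau, tau <= sv -> x sv = U s sv tau (x tau)).

Definition kernel_section {X S : Type} (d : X -> X -> R)
    (U : S -> R -> R -> X -> X) (s : S) (t : R) : X -> Prop :=
  fun y => exists x, complete_bounded_traj d U s x /\ x t = y.

From Stdlib Require Import Reals List Lra Lia ZArith Classical ClassicalEpsilon.
Open Scope R_scope.

(* A point of a kernel section lies in [A], which is closed and attracts the bounded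
   trajectory through it.  Conversely, by minimality of [A] it suffices that the union
   [B] of the kernel sections at time 0 is compact and uniformly attracting, and both
   follow from one compactness fact: for symbols [s_n], times [t_n >= n] and points [c_n]
   of a bounded set, a subsequence of [U s_n 0 (-t_n) c_n] converges to a point of [B].
   For it, consider the states at the times [-k h] and symbols pulled back by [k]
   preimages under [T h]: for each [k] the states are eventually near the compact [A] and
   the symbols lie in the compact [Sigma], so successive extractions give limits [z_k],
   [s_k] with [U s_(k+1) h 0 z_(k+1) = z_k] and [T h s_(k+1) = s_k] (this is where the
   two maps are required to be closed).  Gluing the forward orbits of the [z_k] yields a
   complete bounded trajectory of [U s_0] through [z_0]. *)

Lemma inv_succ_pos (n : nat) : 0 < / (INR n + 1).
Proof. apply Rinv_0_lt_compat. pose proof (pos_INR n). lra. Qed.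

Lemma inv_succ_eventually_lt (e : R) :
  0 < e -> exists N, forall n, (N <= n)%nat -> / (INR n + 1) < e.
Proof.
  intros He. destruct (INR_unbounded (/ e)) as [N HN]. exists N. intros n Hn.
  apply le_INR in Hn. rewrite <- (Rinv_inv e).
  apply Rinv_lt_contravar; [|lra].
  pose proof (pos_INR n).
  apply Rmult_lt_0_compat; [apply Rinv_0_lt_compat |]; lra.
Qed.

Definition index_above (h r : R) : nat := Z.to_nat (up (r / h)).

Lemma index_above_spec (h r : R) : 0 < h -> r <= INR (index_above h r) * h.
Proof.
  intros Hh. unfold index_above. destruct (archimed (r / h)) as [Hup _].
  assert (Hr : r / h <= INR (Z.to_nat (up (r / h)))).
  { destruct (Z_lt_le_dec (up (r / h)) 0) as [Hneg | Hnonneg].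
    - apply IZR_lt in Hneg. pose proof (pos_INR (Z.to_nat (up (r / h)))). lra.
    - rewrite INR_IZR_INZ, Z2Nat.id by exact Hnonneg. lra. }
  apply (Rmult_le_compat_r h) in Hr; [|lra].
  unfold Rdiv in Hr. rewrite Rmult_assoc, Rinv_l, Rmult_1_r in Hr; lra.
Qed.

Lemma in_le_list_max (l : list nat) (m : nat) : In m l -> (m <= list_max l)%nat.
Proof.
  intros Hm. apply (proj1 (Forall_forall _ l) (proj1 (list_max_le l _) (le_n _))).
  exact Hm.
Qed.

Lemma dependent_choice_nat {Y : Type} (P : nat -> Y -> Prop) (Rel : nat -> Y -> Y -> Prop)
    (y0 : Y) :
  P 0%nat y0 -> (forall k y, P k y -> exists y', P (S k) y' /\ Rel k y y') ->
  exists f : nat -> Y, forall k, P k (f k) /\ Rel k (f k) (f (S k)).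
Proof.
  intros H0 Hstep.
  destruct (choice (fun (ky : nat * Y) y' =>
      P (fst ky) (snd ky) -> P (S (fst ky)) y' /\ Rel (fst ky) (snd ky) y')) as [F HF].
  { intros [k y]. destruct (classic (P k y)) as [Hky | Hky].
    - destruct (Hstep k y Hky) as [y' Hy']. exists y'. auto.
    - exists y. simpl; tauto. }
  set (f := fix f k := match k with 0%nat => y0 | S k => F (k, f k) end).
  assert (Hf : forall k, P k (f k)).
  { induction k as [|k IH]; [exact H0 | apply (HF (k, f k)), IH]. }
  exists f. intro k. split; [apply Hf | apply (HF (k, f k)), Hf].
Qed.

(* Convergence along [chi] only needs [chi n -> oo]; [chi] need not be increasing. *)
Definition extraction (chi : nat -> nat) : Prop := forall n, (n <= chi n)%nat.

Lemma extraction_comp (phi chi : nat -> nat) :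
  extraction phi -> extraction chi -> extraction (fun n => phi (chi n)).
Proof. intros Hphi Hchi n. specialize (Hphi (chi n)). specialize (Hchi n). lia. Qed.

Section Metric.
Variables (X : Type) (d : X -> X -> R).
Hypothesis Hd : is_metric d.

Lemma dist_nonneg x y : 0 <= d x y. Proof. apply (proj1 Hd). Qed.
Lemma dist_refl x : d x x = 0. Proof. apply (proj1 (proj2 Hd)). reflexivity. Qed.
Lemma dist_sym x y : d x y = d y x. Proof. apply (proj1 (proj2 (proj2 Hd))). Qed.
Lemma dist_triangle x y z : d x z <= d x y + d y z.
Proof. apply (proj2 (proj2 (proj2 Hd))). Qed.

Lemma dist_small_eq x y : (forall e, 0 < e -> d x y < e) -> x = y.
Proof.
  intros Hsmall. apply (proj1 (proj2 Hd)).
  destruct (Rle_lt_or_eq_dec _ _ (dist_nonneg x y)) as [Hpos | Hzero]; [|auto].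
  specialize (Hsmall _ Hpos). lra.
Qed.

Lemma seq_conv_extraction u l chi :
  seq_conv d u l -> extraction chi -> seq_conv d (fun n => u (chi n)) l.
Proof.
  intros Hu Hchi e He. destruct (Hu e He) as [N HN]. exists N. intros n Hn.
  apply HN. specialize (Hchi n). lia.
Qed.

Lemma seq_conv_eventually_eq u v l :
  seq_conv d u l -> (exists N, forall n, (N <= n)%nat -> v n = u n) -> seq_conv d v l.
Proof.
  intros Hu [N0 HN0] e He. destruct (Hu e He) as [N HN]. exists (Nat.max N N0).
  intros n Hn. rewrite HN0 by lia. apply HN. lia.
Qed.

Lemma seq_conv_unique u l1 l2 : seq_conv d u l1 -> seq_conv d u l2 -> l1 = l2.
Proof.
  intros H1 H2. apply dist_small_eq. intros e He.
  destruct (H1 (e / 2)) as [N1 HN1]; [lra|]. destruct (H2 (e / 2)) as [N2 HN2]; [lra|].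
  specialize (HN1 (Nat.max N1 N2) ltac:(lia)). specialize (HN2 (Nat.max N1 N2) ltac:(lia)).
  pose proof (dist_triangle l1 (u (Nat.max N1 N2)) l2).
  pose proof (dist_sym l1 (u (Nat.max N1 N2))). lra.
Qed.

Lemma seq_conv_inv_succ u l : (forall n, d (u n) l < / (INR n + 1)) -> seq_conv d u l.
Proof.
  intros Hu e He. destruct (inv_succ_eventually_lt e He) as [N HN]. exists N.
  intros n Hn. specialize (HN n Hn). specialize (Hu n). lra.
Qed.

Definition eventually_near (K : X -> Prop) (u : nat -> X) : Prop :=
  forall e, 0 < e -> exists N, forall n, (N <= n)%nat -> exists k, K k /\ d (u n) k < e.

Definition cluster_point (u : nat -> X) (p : X) : Prop :=
  forall e, 0 < e -> forall N, exists n, (N <= n)%nat /\ d (u n) p < e.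

Lemma eventually_near_full u : eventually_near (fun _ => True) u.
Proof.
  intros e He. exists 0%nat. intros n _. exists (u n). rewrite dist_refl. auto.
Qed.

Lemma compact_cluster_point K u :
  compact_set d K -> eventually_near K u -> exists p, K p /\ cluster_point u p.
Proof.
  intros HK Hu. apply NNPP. intros Hno.
  assert (Hfar : forall p, K p ->
            exists m, forall n, (m <= n)%nat -> / (INR m + 1) <= d (u n) p).
  { intros p Kp. apply NNPP. intros Hnear. apply Hno. exists p. split; [exact Kp|].
    intros e He N. destruct (inv_succ_eventually_lt e He) as [M HM].
    apply NNPP. intros Hnone. apply Hnear. exists (Nat.max N M). intros n Hn.
    apply Rnot_lt_le. intros Hlt. apply Hnone. exists n. split; [lia|].
    specialize (HM (Nat.max N M) ltac:(lia)). lra. }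
  set (V := fun (i : X * nat) z => let '(p, m) := i in
         K p /\ (forall n, (m <= n)%nat -> / (INR m + 1) <= d (u n) p) /\
         d p z < / (INR m + 1) / 2).
  destruct (HK _ V) as [l Hl].
  - intros [p m] z [Kp [Hpm Hpz]]. exists (/ (INR m + 1) / 2 - d p z). split; [lra|].
    intros y Hy. split; [exact Kp | split; [exact Hpm|]].
    pose proof (dist_triangle p z y). lra.
  - intros p Kp. destruct (Hfar p Kp) as [m Hm]. exists (p, m).
    simpl. rewrite dist_refl. pose proof (inv_succ_pos m). repeat split; auto; lra.
  - set (M := list_max (map snd l)). pose proof (inv_succ_pos M).
    destruct (Hu (/ (INR M + 1) / 2)) as [N HN]; [lra|].
    destruct (HN (Nat.max N M) ltac:(lia)) as [k [Kk Hk]].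
    destruct (Hl k Kk) as [[p m] [Hin [Kp [Hpm Hpk]]]].
    assert (HmM : (m <= M)%nat) by apply (in_le_list_max _ _ (in_map snd l (p, m) Hin)).
    specialize (Hpm (Nat.max N M) ltac:(lia)).
    assert (/ (INR M + 1) <= / (INR m + 1)).
    { apply Rinv_le_contravar; [apply Rlt_le_trans with 1; [lra|] |];
        pose proof (pos_INR m); apply le_INR in HmM; lra. }
    pose proof (dist_triangle (u (Nat.max N M)) k p). rewrite (dist_sym k p) in *. lra.
Qed.

Lemma cluster_point_extraction u p :
  cluster_point u p -> exists chi, extraction chi /\ seq_conv d (fun n => u (chi n)) p.
Proof.
  intros Hp.
  destruct (choice (fun n m => (n <= m)%nat /\ d (u m) p < / (INR n + 1))) as [chi Hchi].
  { intro n. apply Hp, inv_succ_pos. }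
  exists chi. split.
  - intro n. apply Hchi.
  - apply seq_conv_inv_succ. intro n. apply Hchi.
Qed.

Lemma compact_seq_extraction K u :
  compact_set d K -> eventually_near K u ->
  exists p chi, K p /\ extraction chi /\ seq_conv d (fun n => u (chi n)) p.
Proof.
  intros HK Hu. destruct (compact_cluster_point K u HK Hu) as [p [Kp Hp]].
  destruct (cluster_point_extraction u p Hp) as [chi Hchi]. exists p, chi. auto.
Qed.

Lemma compact_closed K y :
  compact_set d K -> (forall e, 0 < e -> exists k, K k /\ d y k < e) -> K y.
Proof.
  intros HK Hy. destruct (compact_cluster_point K (fun _ => y) HK) as [p [Kp Hp]].
  - intros e He. exists 0%nat. auto.
  - replace y with p; [exact Kp|]. symmetry. apply dist_small_eq. intros e He.
    destruct (Hp e He 0%nat) as [n [_ Hn]]. exact Hn.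
Qed.

Lemma compact_bounded K a : compact_set d K -> K a -> bounded_set d K.
Proof.
  intros HK Ka.
  destruct (HK nat (fun n z => d a z < INR n)) as [l Hl].
  - intros n z Hz. exists (INR n - d a z). split; [lra|]. intros y Hy.
    pose proof (dist_triangle a z y). lra.
  - intros x _. destruct (INR_unbounded (d a x)) as [N HN]. exists N. lra.
  - exists a, (INR (list_max l)). intros x Kx.
    destruct (Hl x Kx) as [i [Hi Hx]].
    apply in_le_list_max, le_INR in Hi. lra.
Qed.

Lemma closed_subset_compact K F :
  compact_set d K ->
  (forall y, (forall e, 0 < e -> exists b, F b /\ d y b < e) -> F y) ->
  (forall y, F y -> K y) -> compact_set d F.
Proof.
  intros HK HF HFK I V HV Hcov.
  set (W := fun (o : option I) z => match o with Some i => V i z | None => ~ F z end).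
  destruct (HK _ W) as [l Hl].
  - intros [i|] z Hz; simpl in Hz; [apply HV, Hz|].
    assert (exists e, 0 < e /\ forall b, F b -> e <= d z b) as [e [He Hb]].
    { apply NNPP. intros Hnear. apply Hz, HF. intros e He. apply NNPP. intros Hfar.
      apply Hnear. exists e. split; [exact He|]. intros b Fb. apply Rnot_lt_le.
      intros Hlt. apply Hfar. exists b. auto. }
    exists e. split; [exact He|]. intros y Hy Fy. specialize (Hb y Fy). lra.
  - intros x Kx. destruct (classic (F x)) as [Fx | nFx].
    + destruct (Hcov x Fx) as [i Hi]. exists (Some i). exact Hi.
    + exists None. exact nFx.
  - exists (flat_map (fun o => match o with Some i => i :: nil | None => nil end) l).
    intros x Fx. destruct (Hl x (HFK x Fx)) as [[i|] [Hin Hw]]; simpl in Hw.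
    + exists i. split; [|exact Hw]. apply in_flat_map. exists (Some i). simpl. auto.
    + contradiction.
Qed.

End Metric.
Section Processes.
Variables (X Sig : Type) (d : X -> X -> R) (dS : Sig -> Sig -> R).
Hypotheses (Hd : is_metric d) (HdS : is_metric dS).
Variable T : R -> Sig -> Sig.
Hypotheses (HT0 : forall s, T 0 s = s)
  (HTsg : forall h1 h2 s, 0 <= h1 -> 0 <= h2 -> T (h1 + h2) s = T h1 (T h2 s))
  (HTsurj : forall h, 0 <= h -> forall s', exists s, T h s = s').
Variable U : Sig -> R -> R -> X -> X.
Hypotheses (HU : is_process_family U)
  (Htransl : forall s h t tau x, 0 <= h -> tau <= t ->
      U s (h + t) (h + tau) x = U (T h s) t tau x).

Lemma process_id s tau x : U s tau tau x = x.
Proof. apply (proj1 (HU s)). Qed.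

Lemma process_comp s t r tau x :
  r <= t -> tau <= r -> U s t tau x = U s t r (U s r tau x).
Proof. apply (proj2 (HU s)). Qed.

Definition kernel_union (y : X) : Prop := exists s, kernel_section d U s 0 y.

Lemma kernel_section_attracted K s t y :
  compact_set d K -> unif_attracting d U K -> kernel_section d U s t y -> K y.
Proof.
  intros HK HKattr [x [[Hbnd Htraj] <-]]. apply (compact_closed X d Hd K _ HK).
  intros e He. destruct (HKattr _ Hbnd (e / 2) ltac:(lra)) as [T0 HT0'].
  assert (Hlag : T0 <= t - (t - Rabs T0)) by (pose proof (Rle_abs T0); lra).
  destruct (HT0' t (t - Rabs T0) Hlag s (x t)) with (e' := e) as [xi [Kxi Hxi]];
    [| lra | exists xi; auto].
  exists (x (t - Rabs T0)). split; [exists (t - Rabs T0); reflexivity|].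
  symmetry. apply Htraj. pose proof (Rabs_pos T0). lra.
Qed.

(* Surjectivity of [T] lets us move any time interval to one ending at [0]. *)
Lemma process_shift_to_zero s t tau :
  tau <= t -> exists s', forall x, U s t tau x = U s' 0 (tau - t) x.
Proof.
  intros Htau. destruct (Rle_lt_dec 0 t) as [Ht | Ht].
  - exists (T t s). intro x. rewrite <- Htransl by lra. f_equal; ring.
  - destruct (HTsurj (- t) ltac:(lra) s) as [s' <-]. exists s'. intro x.
    rewrite <- Htransl by lra. f_equal; ring.
Qed.

Section Period.
Variable h : R.
Hypothesis Hh : 0 < h.

Lemma semigroup_backward_chain (rr : nat -> Sig) :
  (forall k, T h (rr (S k)) = rr k) -> forall k, T (INR k * h) (rr k) = rr 0%nat.
Proof.
  intros Hrr k. induction k as [|k IH].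
  - simpl. rewrite Rmult_0_l. apply HT0.
  - rewrite S_INR, Rmult_plus_distr_r, Rmult_1_l, HTsg, Hrr; [exact IH | |lra].
    apply Rmult_le_pos; [apply pos_INR | lra].
Qed.

Section BackwardChain.
Variable A : X -> Prop.
Hypotheses (HA_bnd : bounded_set d A) (HA_attr : unif_attracting d U A).
Variables (zz : nat -> X) (rr : nat -> Sig).
Hypotheses (Hzz : forall k, A (zz k))
  (Hrr : forall k, T h (rr (S k)) = rr k)
  (Hzz_chain : forall k, U (rr (S k)) h 0 (zz (S k)) = zz k).

(* The forward orbit of [zz k] read in the time frame of [rr 0], where it starts at [- k h]. *)
Definition chain_orbit (k : nat) (t : R) : X := U (rr k) (t + INR k * h) 0 (zz k).

Lemma chain_orbit_succ k t :
  0 <= t + INR k * h -> chain_orbit (S k) t = chain_orbit k t.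
Proof.
  intros Ht. unfold chain_orbit. rewrite S_INR.
  rewrite (process_comp (rr (S k)) (t + (INR k + 1) * h) h 0) by lra.
  rewrite Hzz_chain, <- (Hrr k), <- Htransl by lra.
  f_equal; ring.
Qed.

Lemma chain_orbit_agree k k' t :
  0 <= t + INR k * h -> 0 <= t + INR k' * h -> chain_orbit k t = chain_orbit k' t.
Proof.
  assert (Hlift : forall m k, 0 <= t + INR k * h -> chain_orbit (m + k) t = chain_orbit k t).
  { intros m k0 Hk0. induction m as [|m IH]; [reflexivity|].
    simpl. rewrite chain_orbit_succ; [exact IH|].
    pose proof (le_INR k0 (m + k0) ltac:(lia)). nra. }
  intros Hk Hk'. destruct (Nat.le_ge_cases k k') as [Hle | Hle].
  - replace k' with ((k' - k) + k)%nat by lia. symmetry. apply Hlift, Hk.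
  - replace k with ((k - k') + k')%nat by lia. apply Hlift, Hk'.
Qed.

Lemma backward_chain_kernel_section : kernel_section d U (rr 0%nat) 0 (zz 0%nat).
Proof.
  set (x := fun t => chain_orbit (index_above h (- t)) t).
  assert (Hx : forall k t, 0 <= t + INR k * h -> x t = chain_orbit k t).
  { intros k t Hk. apply chain_orbit_agree; [|exact Hk].
    pose proof (index_above_spec h (- t) Hh). lra. }
  exists x. split; [split|].
  - destruct HA_bnd as [x0 [r Hr]].
    destruct (HA_attr A HA_bnd 1 ltac:(lra)) as [T0 HT0'].
    exists x0, (r + 2). intros y [t <-].
    pose proof (index_above_spec h (Rabs T0 - t) Hh). pose proof (Rle_abs T0).
    pose proof (Rabs_pos T0). set (k := index_above h (Rabs T0 - t)) in *.
    rewrite (Hx k t) by lra. unfold chain_orbit.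
    destruct (HT0' (t + INR k * h) 0 ltac:(lra) (rr k) (U (rr k) (t + INR k * h) 0 (zz k)))
      with (e' := 2) as [xi [Axi Hxi]]; [exists (zz k); auto | lra |].
    pose proof (Hr xi Axi). pose proof (dist_triangle X d Hd x0 xi (U (rr k) (t + INR k * h) 0 (zz k))).
    rewrite (dist_sym X d Hd xi) in *. lra.
  - intros t tau Htau. pose proof (index_above_spec h (- tau) Hh).
    set (k := index_above h (- tau)) in *.
    rewrite (Hx k t), (Hx k tau) by lra. unfold chain_orbit.
    rewrite <- (semigroup_backward_chain rr Hrr k), <- Htransl
      by (try apply Rmult_le_pos; try apply pos_INR; lra).
    replace (tau + INR k * h) with (INR k * h + tau) by ring.
    replace (t + INR k * h) with (INR k * h + t) by ring.
    apply process_comp; lra.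
  - rewrite (Hx 0%nat 0) by (simpl; lra). unfold chain_orbit. simpl.
    rewrite Rmult_0_l, Rplus_0_r. apply process_id.
Qed.

End BackwardChain.

Section Attractor.
Hypotheses
  (HUclosed : forall xn sn x s z, seq_conv d xn x -> seq_conv dS sn s ->
      seq_conv d (fun n => U (sn n) h 0 (xn n)) z -> U s h 0 x = z)
  (HTclosed : forall sn s s', seq_conv dS sn s ->
      seq_conv dS (fun n => T h (sn n)) s' -> T h s = s')
  (HScomp : compact_set dS (fun _ => True)).
Variable A : X -> Prop.
Hypotheses (HA_comp : compact_set d A) (HA_attr : unif_attracting d U A).
Variable pre : Sig -> Sig.
Hypothesis Hpre : forall s, T h (pre s) = s.

Section PullbackLimit.
Variable C : X -> Prop.
Hypothesis HC : bounded_set d C.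
Variables (sg : nat -> Sig) (sv : nat -> R) (c : nat -> X).
Hypotheses (Hsv : forall n, INR n <= sv n) (Hc : forall n, C (c n)).

Definition pullback (k n : nat) : X := U (sg n) (- (INR k * h)) (- sv n) (c n).
Definition pullback_symbol (k n : nat) : Sig := Nat.iter k pre (sg n).

Lemma pullback_zero n : pullback 0 n = U (sg n) 0 (- sv n) (c n).
Proof. unfold pullback. simpl. rewrite Rmult_0_l, Ropp_0. reflexivity. Qed.

Lemma pullback_symbol_shift k n : T (INR k * h) (pullback_symbol k n) = sg n.
Proof.
  apply (semigroup_backward_chain (fun k => pullback_symbol k n)).
  intro j. apply Hpre.
Qed.

Lemma pullback_near_attractor k phi :
  extraction phi -> eventually_near X d A (fun n => pullback k (phi n)).
Proof.
  intros Hphi e He. destruct (HA_attr C HC (e / 2) ltac:(lra)) as [T0 HT0'].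
  destruct (INR_unbounded (T0 + INR k * h)) as [N HN]. exists N. intros n Hn.
  assert (Hlag : T0 <= - (INR k * h) - - sv (phi n)).
  { pose proof (Hsv (phi n)). pose proof (le_INR N (phi n) ltac:(specialize (Hphi n); lia)).
    lra. }
  destruct (HT0' _ _ Hlag (sg (phi n)) (pullback k (phi n))) with (e' := e)
    as [xi [Axi Hxi]]; [exists (c (phi n)); auto | lra | exists xi; auto].
Qed.

Lemma pullback_succ k n :
  INR (S k) * h <= sv n ->
  U (pullback_symbol (S k) n) h 0 (pullback (S k) n) = pullback k n.
Proof.
  intros Hk. unfold pullback. pose proof (pos_INR k).
  pose proof (Htransl (pullback_symbol (S k) n) (INR (S k) * h) (- (INR k * h))
                (- (INR (S k) * h)) (U (sg n) (- (INR (S k) * h)) (- sv n) (c n))) as Eshift.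
  rewrite pullback_symbol_shift in Eshift. rewrite !S_INR in *.
  rewrite (process_comp (sg n) (- (INR k * h)) (- ((INR k + 1) * h)) (- sv n)) by nra.
  rewrite <- Eshift by nra. f_equal; ring.
Qed.

Definition limit_state (k : nat) (p : X) (q : Sig) (phi : nat -> nat) : Prop :=
  extraction phi /\ A p /\
  seq_conv d (fun n => pullback k (phi n)) p /\
  seq_conv dS (fun n => pullback_symbol k (phi n)) q.

Lemma limit_state_refine k phi :
  extraction phi -> exists p q chi, extraction chi /\ limit_state k p q (fun n => phi (chi n)).
Proof.
  intros Hphi.
  destruct (compact_seq_extraction X d Hd A (fun n => pullback k (phi n)) HA_comp
              (pullback_near_attractor k phi Hphi)) as [p [c1 [Ap [Hc1 Hconv1]]]].
  destruct (compact_seq_extraction Sig dS HdS _ (fun n => pullback_symbol k (phi (c1 n)))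
              HScomp (eventually_near_full Sig dS HdS _)) as [q [c2 [_ [Hc2 Hconv2]]]].
  exists p, q, (fun n => c1 (c2 n)).
  split; [apply extraction_comp; assumption|].
  split; [apply extraction_comp; [|apply extraction_comp]; assumption|].
  split; [exact Ap|]. split; [|exact Hconv2].
  exact (seq_conv_extraction X d _ _ _ Hconv1 Hc2).
Qed.

(* The closedness of [U (.) h 0] and [T h] lets the limits at consecutive levels
   [k] and [S k] inherit the relations [pullback_succ] and [Hpre]. *)
Lemma limit_state_succ k p q phi :
  limit_state k p q phi ->
  exists p' q' phi', limit_state (S k) p' q' phi' /\ U q' h 0 p' = p /\ T h q' = q.
Proof.
  intros [Hphi [_ [Hp Hq]]].
  destruct (limit_state_refine (S k) phi Hphi) as [p' [q' [chi [Hchi Hst]]]].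
  exists p', q', (fun n => phi (chi n)). split; [exact Hst|].
  destruct Hst as [Hphi' [_ [Hp' Hq']]]. split.
  - apply (HUclosed _ _ _ _ _ Hp' Hq').
    apply (seq_conv_eventually_eq X d _ _ _ (seq_conv_extraction X d _ _ _ Hp Hchi)).
    destruct (INR_unbounded (INR (S k) * h)) as [N HN]. exists N. intros n Hn.
    apply pullback_succ.
    pose proof (Hsv (phi (chi n))). pose proof (le_INR N _ (Nat.le_trans _ _ _ Hn (Hphi' n))).
    lra.
  - apply (HTclosed _ _ _ Hq').
    apply (seq_conv_eventually_eq Sig dS _ _ _ (seq_conv_extraction Sig dS _ _ _ Hq Hchi)).
    exists 0%nat. intros n _. apply Hpre.
Qed.

Lemma pullback_limit_in_kernel :
  exists y, kernel_union y /\ exists chi, extraction chi /\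
    seq_conv d (fun n => U (sg (chi n)) 0 (- sv (chi n)) (c (chi n))) y.
Proof.
  destruct (limit_state_refine 0 (fun n => n) (fun n => le_n n)) as [p0 [q0 [chi0 [_ H0]]]].
  destruct (dependent_choice_nat
              (fun k pq => exists phi, limit_state k (fst pq) (snd pq) phi)
              (fun _ pq pq' => U (snd pq') h 0 (fst pq') = fst pq /\ T h (snd pq') = snd pq)
              (p0, q0)) as [f Hf].
  - exists (fun n => chi0 n). exact H0.
  - intros k [p q] [phi Hst]. destruct (limit_state_succ k p q phi Hst)
      as [p' [q' [phi' [Hst' Hrel]]]]. exists (p', q'). split; [exists phi'|]; assumption.
  - destruct (Hf 0%nat) as [[phi [Hphi [Ay [Hy _]]]] _].
    exists (fst (f 0%nat)). split.
    + exists (snd (f 0%nat)).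
      apply (backward_chain_kernel_section A (compact_bounded X d Hd A _ HA_comp Ay) HA_attr
               (fun k => fst (f k)) (fun k => snd (f k))); intro k.
      * destruct (Hf k) as [[phik [_ [Ak _]]] _]. exact Ak.
      * apply (Hf k).
      * apply (Hf k).
    + exists phi. split; [exact Hphi|].
      apply (seq_conv_eventually_eq X d _ _ _ Hy). exists 0%nat. intros n _.
      symmetry. apply pullback_zero.
Qed.

End PullbackLimit.

Lemma kernel_union_closed y :
  (forall e, 0 < e -> exists b, kernel_union b /\ d y b < e) -> kernel_union y.
Proof.
  intros Hy.
  assert (Happrox : forall m : nat, exists sa : Sig * X,
            A (snd sa) /\ d y (U (fst sa) 0 (- INR m) (snd sa)) < / (INR m + 1)).
  { intro m. destruct (Hy _ (inv_succ_pos m)) as [b [[s [x [[Hbnd Htraj] <-]]] Hyb]].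
    exists (s, x (- INR m)). split.
    - apply (kernel_section_attracted A s (- INR m)); [exact HA_comp | exact HA_attr|].
      exists x. split; [split|]; auto.
    - simpl. rewrite <- Htraj; [exact Hyb|]. pose proof (pos_INR m). lra. }
  destruct (choice _ Happrox) as [f Hf].
  destruct (pullback_limit_in_kernel A
              (compact_bounded X d Hd A _ HA_comp (proj1 (Hf 0%nat)))
              (fun m => fst (f m)) INR (fun m => snd (f m)))
    as [y' [Hy' [chi [Hchi Hconv]]]]; [intro; lra | intro m; apply Hf |].
  replace y with y'; [exact Hy'|].
  apply (seq_conv_unique X d Hd _ _ _ Hconv).
  apply (seq_conv_extraction X d (fun m => U (fst (f m)) 0 (- INR m) (snd (f m))));
    [apply (seq_conv_inv_succ X d) | exact Hchi].
  intro m. rewrite (dist_sym X d Hd). apply Hf.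
Qed.

Lemma kernel_union_attracting : unif_attracting d U kernel_union.
Proof.
  intros C HC e He. apply NNPP. intros Hnot.
  assert (Hbad : forall n : nat, exists scr : Sig * X * R,
            C (snd (fst scr)) /\ INR n <= snd scr /\
            forall xi, kernel_union xi ->
              e < d (U (fst (fst scr)) 0 (- snd scr) (snd (fst scr))) xi).
  { intro n. apply NNPP. intros Hnone. apply Hnot. exists (INR n).
    intros t tau Hlag s z [c0 [Cc0 <-]] e' He'. apply NNPP. intros Hfar. apply Hnone.
    destruct (process_shift_to_zero s t tau) as [s' Hs'];
      [pose proof (pos_INR n); lra|].
    exists (s', c0, t - tau). simpl. split; [exact Cc0 | split; [lra|]].
    intros xi Hxi. replace (- (t - tau)) with (tau - t) by ring. rewrite <- Hs'.
    apply Rnot_le_lt. intros Hclose. apply Hfar. exists xi. split; [exact Hxi | lra]. }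
  destruct (choice _ Hbad) as [f Hf].
  destruct (pullback_limit_in_kernel C HC (fun n => fst (fst (f n))) (fun n => snd (f n))
              (fun n => snd (fst (f n)))) as [y [Hy [chi [_ Hconv]]]];
    [intro n; apply Hf | intro n; apply Hf |].
  destruct (Hconv e He) as [N HN]. specialize (HN N (le_n N)).
  destruct (Hf (chi N)) as [_ [_ Hfar]]. specialize (Hfar y Hy). lra.
Qed.

End Attractor.
End Period.
End Processes.

Theorem theorem5p3
  (X S : Type) (d : X -> X -> R) (dS : S -> S -> R)
  (Hd : is_metric d) (HdS : is_metric dS)
  (HScomp : compact_set dS (fun _ => True))
  (T : R -> S -> S)
  (HT0 : forall s, T 0 s = s)
  (HTsg : forall h1 h2 s, 0 <= h1 -> 0 <= h2 -> T (h1 + h2) s = T h1 (T h2 s))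
  (HTsurj : forall h, 0 <= h -> forall s', exists s, T h s = s')
  (U : S -> R -> R -> X -> X)
  (HU : is_process_family U)
  (Htransl : forall s h t tau x, 0 <= h -> tau <= t ->
      U s (h + t) (h + tau) x = U (T h s) t tau x)
  (Hcompact_attr : exists K, compact_set d K /\ unif_attracting d U K)
  (A : X -> Prop)
  (HA_comp : compact_set d A) (HA_attr : unif_attracting d U A)
  (HA_min : forall K, compact_set d K -> unif_attracting d U K ->
      forall x, A x -> K x)
  (hstar : R) (Hhstar : 0 < hstar)
  (HUclosed : forall (xn : nat -> X) (sn : nat -> S) (x : X) (s : S) (z : X),
      seq_conv d xn x -> seq_conv dS sn s ->
      seq_conv d (fun n => U (sn n) hstar 0 (xn n)) z ->
      U s hstar 0 x = z)
  (HTclosed : forall (sn : nat -> S) (s s' : S),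
      seq_conv dS sn s -> seq_conv dS (fun n => T hstar (sn n)) s' ->
      T hstar s = s') :
  forall x, A x <-> exists s, kernel_section d U s 0 x.
Proof.
  destruct (choice (fun s s0 => T hstar s0 = s)) as [pre Hpre].
  { intro s. apply HTsurj. lra. }
  assert (Hkernel_in_A : forall y, kernel_union X S d U y -> A y).
  { intros y [s Hs]. exact (kernel_section_attracted X S d Hd U A s 0 y HA_comp HA_attr Hs). }
  intro x. split; [|exact (Hkernel_in_A x)].
  intro Ax. apply (HA_min (kernel_union X S d U)); [| | exact Ax].
  - apply (closed_subset_compact X d A); [exact HA_comp | | exact Hkernel_in_A].
    exact (kernel_union_closed X S d dS Hd HdS T HT0 HTsg U HU Htransl hstar Hhstar
             HUclosed HTclosed HScomp A HA_comp HA_attr pre Hpre).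
  - exact (kernel_union_attracting X S d dS Hd HdS T HT0 HTsg HTsurj U HU Htransl hstar
             Hhstar HUclosed HTclosed HScomp A HA_comp HA_attr pre Hpre).
Qed.
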